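(* Let $m\ge 2$ and consider the system $$\frac{du_i}{dt}=-a_iu_i+\sum_{j=1}^m w_{ij}f_j(u_j)+k\,\varphi_i(\rho)\,u_i+J_i-P\sum_{j=1}^m(u_i-u_j),\quad 1\le i\le m,\qquad \frac{d\rho}{dt}=\sum_{i=1}^m\gamma_iu_i-b\rho,$$ with $P>0$; $a_i,b,\beta,\eta_i,k>0$; $w_{ij},J_i,\gamma_i\in\mathbb{R}$; $f_i,\varphi_i$ locally Lipschitz with $a_i>k$, $|f_i(s)|\le\beta$, $\varphi_i(s)=1-\eta_is^2$ for all $s\in\mathbb{R}$, $1\le i\le m$. Define $a=\min_ia_i$, $W=\max_{i,j}|w_{ij}|$, $J=\max_i|J_i|$, $\gamma^2=\max_i\gamma_i^2$, $$C_1=\frac{1}{a-k}\Big(\frac{m\gamma^2}{b}+b\Big),\ C_2=\Big(\frac{m\gamma^2}{b}+b\Big)\frac{m(mW\beta+J)^2}{(a-k)^2},\ \mu_0=b\min\Big\{\frac1{C_1},1\Big\},\ Q=1+\frac{C_2}{\mu_0\min\{C_1,1\}},$$ and $a^*=\max_{i,j}|a_i-a_j|$, $W^*=\max_{i,j,\ell}|w_{i\ell}-w_{j\ell}|$, $\eta^*=\max_{i,j}|\eta_i-\eta_j|$, $J^*=\max_{i,j}|J_i-J_j|$. For $\varepsilon>0$ let $$P^*(\varepsilon)=\frac{1}{m\varepsilon}\big(mW^*\beta+a^*Q^{1/2}+k\eta^*Q^{3/2}+J^*\big).$$ Then for every $\varepsilon>0$, if $P>P^*(\varepsilon)$, $$\sup_{g^0\in\mathbb{R}^{m+1}}\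 \max_{1\le i<j\le m}\ \limsup_{t\to\infty}|u_i(t)-u_j(t)|<\varepsilon,$$ with uniform exponential convergence rate $\mu=a-k+P$, in the sense that there is a constant $D<\varepsilon$ (independent of the initial state) such that for every initial state there is $T\ge0$ with $|u_i(t)-u_j(t)|^2\le e^{-\mu(t-T)}|u_i(T)-u_j(T)|^2+D^2$ for all $t>T$ and all $i\ne j$.
   Context: Here $(u_1,\dots,u_m,\rho)$ denotes the (global) solution with initial state $g^0=(u_1(0),\dots,u_m(0),\rho(0))\in\mathbb{R}^{m+1}$. This is the variant of the memristive Hopfield network in which the sigmoidal weak coupling $-Pu_i\sum_j\Gamma(u_j)$ is replaced by linear (strong) coupling $-P\sum_j(u_i-u_j)$. *)

From mathcomp Require Import all_boot all_order all_algebra.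
From mathcomp Require Import all_classical all_reals all_analysis.
Set Implicit Arguments. Unset Strict Implicit. Unset Printing Implicit Defensive.
Import Order.TTheory GRing.Theory Num.Theory.
Import numFieldNormedType.Exports.
Local Open Scope classical_set_scope.
Local Open Scope ring_scope.

(* Families are indexed by natural numbers; only the indices i < m matter. *)

Definition locally_lipschitz (R : realType) (f : R -> R) : Prop :=
  forall x : R, exists2 d : R, 0 < d &
    exists L : R, forall y z : R, `|y - x| < d -> `|z - x| < d ->
      `|f y - f z| <= L * `|y - z|.

(* a = min_i a_i  (m >= 1, so a 0 is one of the a_i) *)
Definition amin (R : realType) (m : nat) (a : nat -> R) : R :=
  \big[Num.min/a 0%N]_(i < m) a i.
(* maxima of nonnegative quantities (identity 0) *)
Definition Wmax (R : realType) (m : nat) (w : nat -> nat -> R) : R :=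
  \big[Num.max/0]_(i < m) \big[Num.max/0]_(j < m) `|w i j|.
Definition Jmax (R : realType) (m : nat) (J : nat -> R) : R :=
  \big[Num.max/0]_(i < m) `|J i|.
Definition gamma2 (R : realType) (m : nat) (g : nat -> R) : R :=
  \big[Num.max/0]_(i < m) (g i ^+ 2).
Definition spread (R : realType) (m : nat) (x : nat -> R) : R :=
  \big[Num.max/0]_(i < m) \big[Num.max/0]_(j < m) `|x i - x j|.
Definition Wspread (R : realType) (m : nat) (w : nat -> nat -> R) : R :=
  \big[Num.max/0]_(i < m) \big[Num.max/0]_(j < m) \big[Num.max/0]_(l < m)
     `|w i l - w j l|.

Section Consts.
Variables (R : realType) (m : nat) (a : nat -> R) (b k beta : R)
  (w : nat -> nat -> R) (J gam : nat -> R).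
Definition C1 : R :=
  (amin m a - k)^-1 * (m%:R * gamma2 m gam / b + b).
Definition C2 : R :=
  (m%:R * gamma2 m gam / b + b) *
  (m%:R * (m%:R * Wmax m w * beta + Jmax m J) ^+ 2 / (amin m a - k) ^+ 2).
Definition mu0 : R := b * Num.min (C1^-1) 1.
Definition Qc : R := 1 + C2 / (mu0 * Num.min C1 1).
End Consts.

Definition Pstar (R : realType) (m : nat) (a : nat -> R) (b k beta : R)
  (w : nat -> nat -> R) (J gam eta : nat -> R) (eps : R) : R :=
  let Q := Qc m a b k beta w J gam in
  (m%:R * eps)^-1 *
  (m%:R * Wspread m w * beta + spread m a * Num.sqrt Q
   + k * spread m eta * (Q * Num.sqrt Q) + spread m J).

Definition is_solution (R : realType) (m : nat) (a : nat -> R) (b k P : R)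
  (w : nat -> nat -> R) (f phi : nat -> R -> R) (J gam : nat -> R)
  (u : nat -> R -> R) (rho : R -> R) : Prop :=
  (forall i, (i < m)%N -> u i x @[x --> 0^'+] --> u i 0)
  /\ rho x @[x --> 0^'+] --> rho 0
  /\ forall t : R, 0 < t ->
     (forall i, (i < m)%N ->
        derivable (u i) t 1 /\
        derive1 (u i) t = - a i * u i t + \sum_(j < m) w i j * f j (u j t)
                      + k * phi i (rho t) * u i t + J i
                      - P * \sum_(j < m) (u i t - u j t))
     /\ derivable rho t 1
     /\ derive1 rho t = \sum_(i < m) gam i * u i t - b * rho t.

From mathcomp Require Import all_boot all_order all_algebra.
From mathcomp Require Import all_classical all_reals all_analysis.
From mathcomp Require Import ring lra.
Import Order.TTheory GRing.Theory Num.Theory.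
Import numFieldNormedType.Exports.
Local Open Scope classical_set_scope.
Local Open Scope ring_scope.

(* The energy E = \sum_i u_i^2 satisfies E' <= -(a - k) E + m M^2 / (a - k) with
   M = m W beta + J: the linear coupling is dissipative and k phi_i(rho) <= k.  By the
   comparison principle E eventually lies below U + delta, U = m M^2 / (a - k)^2; fed into
   the rho-equation this bounds rho^2 eventually by 1 + g U <= Q, g = m gamma^2 / b^2, so
   from some time on rho^2 <= Q and |u_l| <= Q^(1/2).  For a difference e = u_i - u_j the
   coupling contributes -P m e, and what remains apart from -(a_i - k + k eta_i rho^2) e is
   a heterogeneity term bounded by G = m W* beta + a* Q^(1/2) + k eta* Q^(3/2) + J*.  Hence
   (e^2)' <= -c e^2 + G^2 / c with c = a - k + P m, and e^2 decays exponentially to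
   (G / c)^2; finally G < m eps P <= eps c because P > P*(eps). *)

Section LinearDifferentialInequality.
Context {R : realType}.

Lemma is_derive_sqr {f : R -> R} {x df : R} :
  is_derive x 1 f df -> is_derive x 1 (fun t => f t ^+ 2) (2 * f x * df).
Proof.
move=> f_df; have := is_deriveM f_df f_df.
by have -> : f x *: df + f x *: df = 2 * f x * df by rewrite /GRing.scale /=; ring.
Qed.

Lemma is_derive_expRM (c x : R) :
  is_derive x 1 (fun s => expR (c * s)) (expR (c * x) * c).
Proof.
have dcx : is_derive x 1 ( *%R c) c.
  by have := is_deriveZ c (is_derive_id x 1); rewrite /GRing.scale /= mulr1.
exact: (is_derive1_comp (is_derive_expR _) dcx).
Qed.

Lemma differential_inequality_le {y dy : R -> R} {T0 c K : R} :
  0 < c -> 0 <= K ->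
  (forall t, T0 <= t -> is_derive t 1 y (dy t)) ->
  (forall t, T0 <= t -> dy t <= - c * y t + K) ->
  forall t, T0 <= t -> y t <= expR (- c * (t - T0)) * y T0 + K / c.
Proof.
move=> c_gt0 K_ge0 y_dy dy_le t T0t.
pose z s := expR (c * s) * (y s - K / c).
have z_dz s : T0 <= s -> is_derive s 1 z (expR (c * s) * (dy s + c * y s - K)).
  move=> T0s.
  have yK_dy : is_derive s 1 (fun r => y r - K / c) (dy s).
    by have := is_deriveB (y_dy s T0s) (is_derive_cst (K / c) s 1); rewrite subr0.
  have -> : expR (c * s) * (dy s + c * y s - K)
      = expR (c * s) *: dy s + (y s - K / c) *: (expR (c * s) * c).
    by rewrite /GRing.scale /=; field; rewrite gt_eqF.
  exact: is_deriveM (is_derive_expRM c s) yK_dy.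
have z_le : z t <= z T0.
  apply: (ler0_derive1_le_cc (a := T0) (b := t)); rewrite ?in_itv /= ?lexx ?T0t //.
  - by move=> s; rewrite in_itv /= => /andP[/ltW /z_dz []].
  - move=> s; rewrite in_itv /= => /andP[/ltW T0s _].
    rewrite derive1E (@derive_val _ _ _ _ _ _ _ (z_dz s T0s)) pmulr_rle0 ?expR_gt0 //.
    by have := dy_le s T0s; lra.
  - apply: derivable_within_continuous => s; rewrite in_itv /= => /andP[T0s _].
    by have [] := z_dz s T0s.
set e := expR (- c * (t - T0)).
have e_ge0 : 0 <= e by rewrite ltW ?expR_gt0.
have y_le : y t - K / c <= e * (y T0 - K / c).
  rewrite -(ler_pM2l (expR_gt0 (c * t))) mulrA (mulrC _ e) -expRD.
  by have -> : - c * (t - T0) + c * t = c * T0 by ring.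
have := divr_ge0 K_ge0 (ltW c_gt0); nra.
Qed.

Lemma expR_decay_eventually_le (T c e Y : R) : 0 < c -> 0 < e -> 0 <= Y ->
  exists T1, T <= T1 /\ forall t, T1 <= t -> expR (- c * (t - T)) * Y <= e.
Proof.
move=> c_gt0 e_gt0 Y_ge0.
have q_gt0 : 0 < e / (Y + 1) by rewrite divr_gt0 //; lra.
set L := ln (e / (Y + 1)).
exists (T + `|L| / c); split => [|t Tt]; first by rewrite lerDl divr_ge0 // ltW.
have exponent_le : - c * (t - T) <= L.
  have : `|L| <= (t - T) * c by rewrite -ler_pdivrMr //; lra.
  by have := ler_norm (- L); rewrite normrN; lra.
have : expR (- c * (t - T)) <= e / (Y + 1).
  by rewrite -[X in _ <= X](lnK q_gt0) ler_expR.
rewrite ler_pdivlMr; last lra.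
by have := expR_gt0 (- c * (t - T)); nra.
Qed.

Lemma differential_inequality_eventually_le {y dy : R -> R} {T0 c K e : R} :
  0 < c -> 0 <= K -> 0 < e ->
  (forall t, T0 <= t -> is_derive t 1 y (dy t)) ->
  (forall t, T0 <= t -> dy t <= - c * y t + K) ->
  exists T1, T0 <= T1 /\ forall t, T1 <= t -> y t <= K / c + e.
Proof.
move=> c_gt0 K_ge0 e_gt0 y_dy dy_le.
have [T1 [T01 decay]] := expR_decay_eventually_le T0 _ _ _ c_gt0 e_gt0 (normr_ge0 (y T0)).
exists T1; split => // t T1t.
have := differential_inequality_le c_gt0 K_ge0 y_dy dy_le t (le_trans T01 T1t).
have := decay t T1t; have := ler_norm (y T0).
by have := expR_gt0 (- c * (t - T0)); nra.
Qed.

Lemma eventually_norm_le_of_sqr_decay {z : R -> R} {c D T : R} :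
  0 < c -> 0 <= D ->
  (forall t, T <= t -> z t ^+ 2 <= expR (- c * (t - T)) * z T ^+ 2 + D ^+ 2) ->
  forall d : R, 0 < d -> exists T1, forall t, T1 < t -> `|z t| <= D + d.
Proof.
move=> c_gt0 D_ge0 z_le d d_gt0.
have [T1 [TT1 decay]] :=
  expR_decay_eventually_le T _ _ _ c_gt0 (exprn_gt0 2 d_gt0) (sqr_ge0 (z T)).
exists T1 => t /ltW T1t.
have := z_le t (le_trans TT1 T1t); have := decay t T1t.
rewrite -(real_normK (num_real (z t))).
by have := normr_ge0 (z t); nra.
Qed.

End LinearDifferentialInequality.

Section SumInequalities.
Context {R : realFieldType}.

Lemma young_sqr (x y c : R) : 0 < c -> 2 * x * y <= c * x ^+ 2 + y ^+ 2 / c.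
Proof.
move=> c_gt0; rewrite -(ler_pM2l c_gt0).
have -> : c * (c * x ^+ 2 + y ^+ 2 / c) = (c * x - y) ^+ 2 + c * (2 * x * y).
  by field; rewrite gt_eqF.
by rewrite lerDr sqr_ge0.
Qed.

Lemma normD_le (y z B1 B2 : R) : `|y| <= B1 -> `|z| <= B2 -> `|y + z| <= B1 + B2.
Proof. by move=> y_le z_le; apply: le_trans (ler_normD y z) (lerD y_le z_le). Qed.

Lemma norm_sum_le (m : nat) (F : nat -> R) (B : R) :
  (forall j, (j < m)%N -> `|F j| <= B) -> `|\sum_(j < m) F j| <= m%:R * B.
Proof.
move=> F_le; apply: le_trans (ler_norm_sum _ _ _) _.
have -> : m%:R * B = \sum_(j < m) B by rewrite sumr_const card_ord mulr_natl.
by apply: ler_sum => j _; apply: F_le.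
Qed.

Lemma sqr_le_sum (m : nat) (y : nat -> R) (i : nat) :
  (i < m)%N -> y i ^+ 2 <= \sum_(l < m) y l ^+ 2.
Proof.
move=> im; rewrite (bigD1 (Ordinal im)) //= lerDl.
by apply: sumr_ge0 => l _; apply: sqr_ge0.
Qed.

(* Symmetrizing in (i, j) gives twice the sum of the (x i - x j)^2. *)
Lemma sum_mul_sum_sub_ge0 (m : nat) (x : nat -> R) :
  0 <= \sum_(i < m) x i * \sum_(j < m) (x i - x j).
Proof.
set S := \sum_(i < m) _.
have S_ij : S = \sum_(i < m) \sum_(j < m) x i * (x i - x j).
  by apply: eq_bigr => i _; rewrite mulr_sumr.
have S_ji : S = \sum_(i < m) \sum_(j < m) x j * (x j - x i).
  by rewrite S_ij exchange_big.
have : S + S = \sum_(i < m) \sum_(j < m) (x i - x j) ^+ 2.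
  rewrite {1}S_ij S_ji -big_split; apply: eq_bigr => i _.
  by rewrite -big_split; apply: eq_bigr => j _ /=; ring.
have : 0 <= \sum_(i < m) \sum_(j < m) (x i - x j) ^+ 2.
  by apply: sumr_ge0 => i _; apply: sumr_ge0 => j _; apply: sqr_ge0.
lra.
Qed.

Lemma sum_sub_const (m : nat) (x : R) (y : nat -> R) :
  \sum_(j < m) (x - y j) = x * m%:R - \sum_(j < m) y j.
Proof. by rewrite sumrB sumr_const card_ord mulr_natr. Qed.

Lemma sqr_sum_le (m : nat) (y : nat -> R) :
  (\sum_(i < m) y i) ^+ 2 <= m%:R * \sum_(i < m) y i ^+ 2.
Proof.
have := sum_mul_sum_sub_ge0 m y.
suff -> : \sum_(i < m) y i * \sum_(j < m) (y i - y j)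
    = m%:R * \sum_(i < m) y i ^+ 2 - (\sum_(i < m) y i) ^+ 2 by lra.
under eq_bigr => i _ do rewrite sum_sub_const mulrBr.
rewrite sumrB -mulr_suml expr2; congr (_ - _).
by rewrite mulr_sumr; apply: eq_bigr => i _; ring.
Qed.

End SumInequalities.

Section Extrema.
Context {R : realType} (m : nat).

Lemma le_spread (x : nat -> R) (i j : nat) :
  (i < m)%N -> (j < m)%N -> `|x i - x j| <= spread m x.
Proof.
move=> im jm; apply: le_trans (le_bigmax _ _ (Ordinal im)).
exact: (le_bigmax _ (fun j : 'I_m => `|x i - x j|) (Ordinal jm)).
Qed.

Lemma le_Wspread (w : nat -> nat -> R) (i j l : nat) :
  (i < m)%N -> (j < m)%N -> (l < m)%N -> `|w i l - w j l| <= Wspread m w.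
Proof.
move=> im jm lm; apply: le_trans (le_bigmax _ _ (Ordinal im)).
apply: le_trans (le_bigmax _ _ (Ordinal jm)).
exact: (le_bigmax _ (fun l : 'I_m => `|w i l - w j l|) (Ordinal lm)).
Qed.

Lemma le_Wmax (w : nat -> nat -> R) (i j : nat) :
  (i < m)%N -> (j < m)%N -> `|w i j| <= Wmax m w.
Proof.
move=> im jm; apply: le_trans (le_bigmax _ _ (Ordinal im)).
exact: (le_bigmax _ (fun j : 'I_m => `|w i j|) (Ordinal jm)).
Qed.

Lemma le_Jmax (J : nat -> R) (i : nat) : (i < m)%N -> `|J i| <= Jmax m J.
Proof. by move=> im; apply: (le_bigmax _ (fun i : 'I_m => `|J i|) (Ordinal im)). Qed.

Lemma le_gamma2 (g : nat -> R) (i : nat) : (i < m)%N -> g i ^+ 2 <= gamma2 m g.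
Proof. by move=> im; apply: (le_bigmax _ (fun i : 'I_m => g i ^+ 2) (Ordinal im)). Qed.

Lemma gamma2_ge0 (g : nat -> R) : 0 <= gamma2 m g.
Proof. exact: bigmax_ge_id. Qed.

Lemma spread_ge0 (x : nat -> R) : 0 <= spread m x.
Proof. exact: bigmax_ge_id. Qed.

Lemma Wspread_ge0 (w : nat -> nat -> R) : 0 <= Wspread m w.
Proof. exact: bigmax_ge_id. Qed.

Lemma amin_le (a : nat -> R) (i : nat) : (i < m)%N -> amin m a <= a i.
Proof. by move=> im; apply: (bigmin_le_cond _ (P := xpredT) a (j := Ordinal im)). Qed.

Lemma amin_gt (a : nat -> R) (k : R) :
  (0 < m)%N -> (forall i, (i < m)%N -> k < a i) -> k < amin m a.
Proof. by move=> m_gt0 k_lt; apply: lt_bigmin => [|i _]; apply: k_lt. Qed.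

End Extrema.

Lemma Qc_ge (R : realType) (m : nat) (a : nat -> R) (b k beta : R)
    (w : nat -> nat -> R) (J gam : nat -> R) :
  0 < b -> k < amin m a ->
  1 + (1 + m%:R * gamma2 m gam / b ^+ 2)
      * (m%:R * (m%:R * Wmax m w * beta + Jmax m J) ^+ 2 / (amin m a - k) ^+ 2)
    <= Qc m a b k beta w J gam.
Proof.
move=> b_gt0 k_lt_a; rewrite /Qc /C2 /mu0 /C1.
set U := _ / (amin m a - k) ^+ 2; set B := _ + b.
have g_ge0 : 0 <= m%:R * gamma2 m gam by rewrite mulr_ge0 ?gamma2_ge0.
have B_gt0 : 0 < B by apply: ltr_wpDl => //; rewrite divr_ge0 // ltW.
set C := _^-1 * B.
have C_gt0 : 0 < C by rewrite mulr_gt0 // invr_gt0 subr_gt0.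
have min1_gt0 (x : R) : 0 < x -> 0 < Num.min x 1 by move=> x_gt0; rewrite lt_min x_gt0 ltr01.
have min1_le1 (x : R) : Num.min x 1 <= 1 by rewrite ge_min lexx orbT.
set p1 := Num.min C^-1 1; set p2 := Num.min C 1.
have p_gt0 : 0 < p1 * p2 by rewrite mulr_gt0 ?min1_gt0 ?invr_gt0.
have p_le1 : p1 * p2 <= 1.
  by rewrite -[1]mulr1 ler_pM ?min1_le1 // ltW ?min1_gt0 ?invr_gt0.
have -> : B * U / (b * p1 * p2) = (1 + m%:R * gamma2 m gam / b ^+ 2) * U / (p1 * p2).
  by rewrite /B; field; rewrite !gt_eqF ?min1_gt0 ?invr_gt0.
rewrite lerD2l ler_pdivlMr //.
have U_ge0 : 0 <= U by rewrite divr_ge0 ?sqr_ge0 // mulr_ge0 ?sqr_ge0.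
have : 0 <= (1 + m%:R * gamma2 m gam / b ^+ 2) * U.
  by rewrite mulr_ge0 // addr_ge0 // divr_ge0 ?sqr_ge0.
nra.
Qed.

Definition hopfield_field {R : realType} (m : nat) (a : nat -> R) (k P : R)
    (eta : nat -> R) (w : nat -> nat -> R) (J : nat -> R) (f : nat -> R -> R)
    (x : nat -> R) (r : R) (i : nat) : R :=
  - a i * x i + \sum_(j < m) w i j * f j (x j) + k * (1 - eta i * r ^+ 2) * x i + J i
  - P * \sum_(j < m) (x i - x j).

Definition sync_forcing {R : realType} (m : nat) (a : nat -> R) (b k beta : R)
    (w : nat -> nat -> R) (J gam eta : nat -> R) : R :=
  let Q := Qc m a b k beta w J gam in
  m%:R * Wspread m w * beta + spread m a * Num.sqrt Q
  + k * spread m eta * (Q * Num.sqrt Q) + spread m J.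

Definition sync_rate {R : realType} (m : nat) (a : nat -> R) (k P : R) : R :=
  amin m a - k + P * m%:R.

Section StronglyCoupledHopfield.
Context {R : realType} {m : nat} {a : nat -> R} {b beta k P : R} {eta : nat -> R}
  {w : nat -> nat -> R} {J gam : nat -> R} {f : nat -> R -> R}.
Hypotheses (m_gt0 : (0 < m)%N) (P_gt0 : 0 < P) (b_gt0 : 0 < b) (k_gt0 : 0 < k)
  (eta_gt0 : forall i, (i < m)%N -> 0 < eta i)
  (k_lt_a : forall i, (i < m)%N -> k < a i)
  (f_bounded : forall i, (i < m)%N -> forall s, `|f i s| <= beta).

Local Notation F := (hopfield_field m a k P eta w J f).
Local Notation G := (sync_forcing m a b k beta w J gam eta).
Local Notation c0 := (sync_rate m a k P).

Let c := amin m a - k.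
Let M := m%:R * Wmax m w * beta + Jmax m J.
Let U := m%:R * M ^+ 2 / c ^+ 2.
Let g := m%:R * gamma2 m gam / b ^+ 2.
Let Q := Qc m a b k beta w J gam.

Let beta_ge0 : 0 <= beta.
Proof. exact: le_trans (normr_ge0 _) (f_bounded 0 m_gt0 0). Qed.

Let c_gt0 : 0 < c. Proof. by rewrite subr_gt0 amin_gt. Qed.

Let g_ge0 : 0 <= g.
Proof. by rewrite divr_ge0 ?sqr_ge0 // mulr_ge0 ?gamma2_ge0. Qed.

Let U_ge0 : 0 <= U.
Proof. by rewrite divr_ge0 ?sqr_ge0 // mulr_ge0 ?sqr_ge0. Qed.

Let Q_ge : 1 + (1 + g) * U <= Q.
Proof. by apply: Qc_ge => //; apply: amin_gt. Qed.

Lemma sync_rate_gt0 : 0 < c0.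
Proof. by rewrite /sync_rate addr_gt0 // mulr_gt0 // ltr0n. Qed.

Lemma sync_forcing_ge0 : 0 <= G.
Proof.
have Q_ge0 : 0 <= Q by have := mulr_ge0 g_ge0 U_ge0; have := Q_ge; have := U_ge0; lra.
by rewrite /sync_forcing -/Q !addr_ge0 ?mulr_ge0 ?ler0n ?Wspread_ge0 ?spread_ge0
  ?sqrtr_ge0 ?(ltW k_gt0) ?beta_ge0.
Qed.

Lemma sync_radius_lt (eps : R) : 0 < eps ->
  Pstar m a b k beta w J gam eta eps < P -> G / c0 < eps.
Proof.
move=> eps_gt0; rewrite /Pstar -/(sync_forcing _ _ _ _ _ _ _ _ _).
have meps_gt0 : 0 < m%:R * eps by rewrite mulr_gt0 // ltr0n.
rewrite ltr_pdivrMl // => G_lt.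
rewrite ltr_pdivrMr ?sync_rate_gt0 // /sync_rate -/c.
have := mulr_gt0 eps_gt0 c_gt0; nra.
Qed.

Lemma input_bound (x : nat -> R) (i : nat) : (i < m)%N ->
  `|\sum_(j < m) w i j * f j (x j) + J i| <= M.
Proof.
move=> im; apply: le_trans (ler_normD _ _) _; apply: lerD; last exact: le_Jmax.
rewrite -mulrA; apply: (norm_sum_le m (fun j => w i j * f j (x j))) => j jm.
by rewrite normrM ler_pM ?le_Wmax ?f_bounded.
Qed.

(* The coupling term drops out: it is dissipative by [sum_mul_sum_sub_ge0]. *)
Lemma energy_field_le (x : nat -> R) (r : R) :
  \sum_(i < m) 2 * x i * F x r i
    <= - c * \sum_(i < m) x i ^+ 2 + m%:R * M ^+ 2 / c.
Proof.
have step (i : 'I_m) : 2 * x i * F x r i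
    <= - c * x i ^+ 2 + M ^+ 2 / c - 2 * P * (x i * \sum_(j < m) (x i - x j)).
  have im := ltn_ord i.
  have input := input_bound x i im.
  have young := young_sqr `|x i| M c c_gt0; rewrite real_normK ?num_real // in young.
  have xI : x i * (\sum_(j < m) w i j * f j (x j) + J i) <= `|x i| * M.
    by apply: le_trans (ler_norm _) _; rewrite normrM ler_wpM2l.
  have a_ge : 0 <= (a i - amin m a) * x i ^+ 2.
    by rewrite mulr_ge0 ?sqr_ge0 // subr_ge0 amin_le.
  have eta_term := mulr_ge0 (ltW k_gt0)
    (mulr_ge0 (mulr_ge0 (ltW (eta_gt0 i im)) (sqr_ge0 r)) (sqr_ge0 (x i))).
  rewrite /hopfield_field /c in young *; nra.
apply: le_trans (ler_sum _ (fun i _ => step i)) _.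
rewrite sumrB big_split /= -!mulr_sumr sumr_const card_ord -[c^-1 *+ m]mulr_natr.
by have := mulr_ge0 (ltW P_gt0) (sum_mul_sum_sub_ge0 m x); lra.
Qed.

Lemma rho_field_le (x : nat -> R) (r : R) :
  2 * r * (\sum_(i < m) gam i * x i - b * r)
    <= - b * r ^+ 2 + m%:R * gamma2 m gam * (\sum_(i < m) x i ^+ 2) / b.
Proof.
set s := \sum_(i < m) gam i * x i.
have s_le : s ^+ 2 <= m%:R * gamma2 m gam * \sum_(i < m) x i ^+ 2.
  apply: le_trans (sqr_sum_le m (fun i => gam i * x i)) _.
  rewrite -mulrA ler_wpM2l // mulr_sumr; apply: ler_sum => i _.
  by rewrite exprMn ler_wpM2r ?sqr_ge0 ?le_gamma2.
have : s ^+ 2 / b <= m%:R * gamma2 m gam * (\sum_(i < m) x i ^+ 2) / b.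
  by rewrite ler_pM2r ?invr_gt0.
by have := young_sqr r s b b_gt0; nra.
Qed.

Let mismatch (x : nat -> R) (r : R) (i j : nat) : R :=
  \sum_(l < m) (w i l - w j l) * f l (x l) + (a j - a i) * x j
  + k * (eta j - eta i) * r ^+ 2 * x j + (J i - J j).

Let hopfield_field_sub (x : nat -> R) (r : R) (i j : nat) :
  F x r i - F x r j
  = - (a i - k + k * eta i * r ^+ 2 + P * m%:R) * (x i - x j) + mismatch x r i j.
Proof.
rewrite /hopfield_field /mismatch !sum_sub_const.
have -> : \sum_(l < m) (w i l - w j l) * f l (x l)
    = \sum_(l < m) w i l * f l (x l) - \sum_(l < m) w j l * f l (x l).
  by rewrite -sumrB; apply: eq_bigr => l _; rewrite mulrBl.
ring.
Qed.

Lemma mismatch_bound (x : nat -> R) (r : R) (i j : nat) :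
  (i < m)%N -> (j < m)%N -> r ^+ 2 <= Q ->
  (forall l, (l < m)%N -> `|x l| <= Num.sqrt Q) -> `|mismatch x r i j| <= G.
Proof.
move=> im jm r_le x_le.
rewrite /mismatch /sync_forcing -/Q; apply: normD_le; last exact: le_spread.
apply: normD_le; [apply: normD_le|].
- rewrite -mulrA; apply: (norm_sum_le m (fun l => (w i l - w j l) * f l (x l))) => l lm.
  by rewrite normrM ler_pM ?le_Wspread ?f_bounded.
- by rewrite normrM ler_pM ?le_spread ?x_le.
- rewrite !normrM (gtr0_norm k_gt0) -expr2 real_normK ?num_real //.
  have -> : k * `|eta j - eta i| * r ^+ 2 * `|x j|
      = k * (`|eta j - eta i| * (r ^+ 2 * `|x j|)) by ring.
  rewrite -[k * spread m eta * _]mulrA ler_wpM2l ?(ltW k_gt0) //.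
  apply: ler_pM; rewrite ?normr_ge0 ?le_spread //.
    exact: mulr_ge0 (sqr_ge0 r) (normr_ge0 _).
  by apply: ler_pM; rewrite ?sqr_ge0 ?normr_ge0 ?x_le.
Qed.

Lemma sync_field_le (x : nat -> R) (r : R) (i j : nat) :
  (i < m)%N -> (j < m)%N -> r ^+ 2 <= Q ->
  (forall l, (l < m)%N -> `|x l| <= Num.sqrt Q) ->
  2 * (x i - x j) * (F x r i - F x r j)
    <= - c0 * (x i - x j) ^+ 2 + G ^+ 2 / c0.
Proof.
move=> im jm r_le x_le; rewrite hopfield_field_sub.
have mis := mismatch_bound x r i j im jm r_le x_le.
have young := young_sqr `|x i - x j| G c0 sync_rate_gt0.
rewrite real_normK ?num_real // in young.
have xG : (x i - x j) * mismatch x r i j <= `|x i - x j| * G.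
  by apply: le_trans (ler_norm _) _; rewrite normrM ler_wpM2l.
have a_ge : 0 <= (a i - amin m a) * (x i - x j) ^+ 2.
  by rewrite mulr_ge0 ?sqr_ge0 // subr_ge0 amin_le.
have eta_term := mulr_ge0 (ltW k_gt0)
  (mulr_ge0 (mulr_ge0 (ltW (eta_gt0 i im)) (sqr_ge0 r)) (sqr_ge0 (x i - x j))).
rewrite /sync_rate in young *; nra.
Qed.

Lemma is_solution_derive {phi u : nat -> R -> R} {rho : R -> R} :
  (forall i, (i < m)%N -> forall s, phi i s = 1 - eta i * s ^+ 2) ->
  is_solution m a b k P w f phi J gam u rho ->
  (forall t : R, 0 < t -> forall i, (i < m)%N -> is_derive t 1 (u i) (F (u^~ t) (rho t) i))
  /\ (forall t : R, 0 < t -> is_derive t 1 rho (\sum_(i < m) gam i * u i t - b * rho t)).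
Proof.
move=> phiE [_ [_ sol]]; split=> [t t_gt0 i im|t t_gt0].
- have [/(_ i im) [u_derivable u_eq] _] := sol t t_gt0.
  by rewrite /hopfield_field -phiE // -u_eq derive1E; apply: derivableP.
- have [_ [rho_derivable rho_eq]] := sol t t_gt0.
  by rewrite -rho_eq derive1E; apply: derivableP.
Qed.

Section Solution.
Context {u : nat -> R -> R} {rho : R -> R}.
Hypotheses
  (u_derive : forall t : R, 0 < t -> forall i, (i < m)%N ->
     is_derive t 1 (u i) (F (u^~ t) (rho t) i))
  (rho_derive : forall t : R, 0 < t ->
     is_derive t 1 rho (\sum_(i < m) gam i * u i t - b * rho t)).

Let E (t : R) := \sum_(i < m) u i t ^+ 2.

Let E_derive (t : R) : 0 < t ->
  is_derive t 1 E (\sum_(i < m) 2 * u i t * F (u^~ t) (rho t) i).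
Proof.
move=> t_gt0; rewrite /E -fct_sumE.
exact: is_derive_sum (fun i : 'I_m => is_derive_sqr (u_derive t t_gt0 i (ltn_ord i))).
Qed.

Lemma energy_eventually_le (e : R) : 0 < e ->
  exists T, 1 <= T /\ forall t, T <= t -> E t <= U + e.
Proof.
move=> e_gt0.
have K_ge0 : 0 <= m%:R * M ^+ 2 / c.
  by rewrite divr_ge0 ?(ltW c_gt0) // mulr_ge0 ?sqr_ge0.
have [T [T_ge1 E_le]] := differential_inequality_eventually_le c_gt0 K_ge0 e_gt0
  (fun t (t_ge1 : 1 <= t) => E_derive t (lt_le_trans ltr01 t_ge1))
  (fun t _ => energy_field_le (u^~ t) (rho t)).
exists T; split => // t Tt; have := E_le t Tt.
by have -> : m%:R * M ^+ 2 / c / c = U by rewrite /U; field; rewrite gt_eqF.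
Qed.

Lemma state_eventually_bounded : exists T, 1 <= T /\ forall t, T <= t ->
  rho t ^+ 2 <= Q /\ forall l, (l < m)%N -> `|u l t| <= Num.sqrt Q.
Proof.
(* chosen so that g (U + e) + e = 1 + g U *)
pose e := (1 + g)^-1.
have e_gt0 : 0 < e by rewrite invr_gt0; have := g_ge0; lra.
have e_le1 : e <= 1 by rewrite invf_le1; have := g_ge0; lra.
have [T1 [T1_ge1 E_le]] := energy_eventually_le e e_gt0.
set K := m%:R * gamma2 m gam * (U + e) / b.
have K_ge0 : 0 <= K.
  apply: divr_ge0 (ltW b_gt0); rewrite mulr_ge0 ?mulr_ge0 ?gamma2_ge0 //.
  by have := U_ge0; lra.
have rho2_derive t : T1 <= t ->
    is_derive t 1 (fun s => rho s ^+ 2)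
      (2 * rho t * (\sum_(i < m) gam i * u i t - b * rho t)).
  by move=> T1t; apply/is_derive_sqr/rho_derive; lra.
have rho2_le t : T1 <= t ->
    2 * rho t * (\sum_(i < m) gam i * u i t - b * rho t) <= - b * rho t ^+ 2 + K.
  move=> T1t; apply: le_trans (rho_field_le (u^~ t) (rho t)) _.
  by rewrite lerD2l ler_pM2r ?invr_gt0 // ler_wpM2l ?mulr_ge0 ?gamma2_ge0 ?E_le.
have [T [T1T rho_le]] :=
  differential_inequality_eventually_le b_gt0 K_ge0 e_gt0 rho2_derive rho2_le.
exists T; split => [|t Tt]; first lra.
have E_le_t := E_le t (le_trans T1T Tt).
split.
- have := rho_le t Tt.
  have -> : K / b = g * (U + e) by rewrite /K /g; field; rewrite gt_eqF.
  have ge_e : (1 + g) * e = 1 by rewrite mulfV // gt_eqF //; have := g_ge0; lra.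
  by have := U_ge0; have := Q_ge; lra.
- move=> l lm; rewrite -sqrtr_sqr ler_wsqrtr //.
  apply: le_trans (sqr_le_sum m (u^~ t) l lm) _.
  by have := mulr_ge0 g_ge0 U_ge0; have := Q_ge; rewrite /E in E_le_t; lra.
Qed.

Lemma sync_error_decay : exists T, 1 <= T /\ forall t, T <= t ->
  forall i j, (i < m)%N -> (j < m)%N ->
  (u i t - u j t) ^+ 2 <= expR (- c0 * (t - T)) * (u i T - u j T) ^+ 2 + (G / c0) ^+ 2.
Proof.
have [T [T_ge1 bounded]] := state_eventually_bounded.
exists T; split => // t Tt i j im jm.
have K_ge0 : 0 <= G ^+ 2 / c0 by rewrite divr_ge0 ?sqr_ge0 // ltW // sync_rate_gt0.
have diff_derive s : T <= s ->
    is_derive s 1 (fun s => (u i s - u j s) ^+ 2)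
      (2 * (u i s - u j s) * (F (u^~ s) (rho s) i - F (u^~ s) (rho s) j)).
  move=> Ts; have s_gt0 : 0 < s by lra.
  exact: is_derive_sqr (is_deriveB (u_derive s s_gt0 i im) (u_derive s s_gt0 j jm)).
have diff_le s : T <= s ->
    2 * (u i s - u j s) * (F (u^~ s) (rho s) i - F (u^~ s) (rho s) j)
      <= - c0 * (u i s - u j s) ^+ 2 + G ^+ 2 / c0.
  by move=> Ts; have [rho_le u_le] := bounded s Ts; apply: sync_field_le.
have := differential_inequality_le sync_rate_gt0 K_ge0 diff_derive diff_le t Tt.
by have -> : G ^+ 2 / c0 / c0 = (G / c0) ^+ 2 by field; rewrite gt_eqF ?sync_rate_gt0.
Qed.

End Solution.

End StronglyCoupledHopfield.

Theorem corollary3p2 (R : realType) (m : nat) (hm : (2 <= m)%N)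
  (a : nat -> R) (b beta k P : R) (eta : nat -> R)
  (w : nat -> nat -> R) (J gam : nat -> R) (f phi : nat -> R -> R)
  (hP : 0 < P) (ha : forall i, (i < m)%N -> 0 < a i) (hb : 0 < b)
  (hbeta : 0 < beta) (heta : forall i, (i < m)%N -> 0 < eta i) (hk : 0 < k)
  (hak : forall i, (i < m)%N -> k < a i)
  (hfL : forall i, (i < m)%N -> locally_lipschitz (f i))
  (hphiL : forall i, (i < m)%N -> locally_lipschitz (phi i))
  (hfb : forall i, (i < m)%N -> forall s, `|f i s| <= beta)
  (hphi : forall i, (i < m)%N -> forall s, phi i s = 1 - eta i * s ^+ 2)
  (eps : R) (heps : 0 < eps)
  (hPs : Pstar m a b k beta w J gam eta eps < P) :
  let mu := amin m a - k + P in
  exists D : R, 0 <= D /\ D < eps /\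
    forall (u : nat -> R -> R) (rho : R -> R),
      is_solution m a b k P w f phi J gam u rho ->
      (* limsup_{t -> oo} |u_i(t) - u_j(t)| <= D < eps *)
      (forall i j, (i < m)%N -> (j < m)%N -> forall d : R, 0 < d ->
         exists T0 : R, forall t, T0 < t -> `|u i t - u j t| <= D + d)
      /\
      (exists T : R, 0 <= T /\ forall t : R, T < t ->
         forall i j, (i < m)%N -> (j < m)%N -> i != j ->
           (u i t - u j t) ^+ 2
             <= expR (- mu * (t - T)) * (u i T - u j T) ^+ 2 + D ^+ 2).
Proof.
(* [ha], [hbeta], [hfL] and [hphiL] only serve the global existence of solutions,
   which [is_solution] presupposes. *)
move=> mu.
have m_gt0 : (0 < m)%N by apply: leq_trans hm.
have rate_gt0 := sync_rate_gt0 m_gt0 hP hak.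
have D_ge0 : 0 <= sync_forcing m a b k beta w J gam eta / sync_rate m a k P.
  by rewrite divr_ge0 ?(ltW rate_gt0) // (sync_forcing_ge0 m_gt0 hb hk hak hfb).
exists (sync_forcing m a b k beta w J gam eta / sync_rate m a k P).
split=> //; split; first exact: sync_radius_lt.
move=> u rho /(is_solution_derive hphi) [u_derive rho_derive].
have [T [T_ge1 decay]] := sync_error_decay m_gt0 hP hb hk heta hak hfb u_derive rho_derive.
split=> [i j im jm|].
  by apply: (eventually_norm_le_of_sqr_decay rate_gt0 D_ge0) => t Tt; apply: decay.
exists T; split=> [|t Tt i j im jm _]; first lra.
apply: le_trans (decay t (ltW Tt) i j im jm) _.
rewrite lerD2r ler_wpM2r ?sqr_ge0 // ler_expR /mu /sync_rate.
have : P <= P * m%:R by rewrite ler_peMr ?(ltW hP) // ler1n ltnW.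
nra.
Qed.
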